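(* Let $i\in\{3\frac{1}{2},4,5\}$ and let $X$ be a locally connected $T_i$-space. Let $\mathscr{Y}_i(X)$ be the set of (equivalence classes of) $T_i$ one-point connectifications of $X$, where for $Y_1,Y_2\in\mathscr{Y}_i(X)$ we put $Y_1\leq Y_2$ if there is a continuous map $f:Y_2\to Y_1$ fixing every point of $X$. Let $$\mathscr{Z}(X)=\{Z\subseteq\beta X\setminus X:\ Z\text{ is compact and } Z\cap\mathrm{cl}_{\beta X}C\neq\emptyset\text{ for every component }C\text{ of }X\},$$ partially ordered by inclusion. For $Z\in\mathscr{Z}(X)$ let $Q$ be the quotient space of $\beta X$ obtained by contracting $Z$ to a single point $z$, and let $\zeta_X(Z)=X\cup\{z\}$, regarded as a subspace of $Q$. Then $\zeta_X(Z)\in\mathscr{Y}_i(X)$ for every $Z\in\mathscr{Z}(X)$, and the map $\zeta_X:(\mathscr{Z}(X),\subseteq)\to(\mathscr{Y}_i(X),\leq)$ is an anti-order-isomorphism.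
   Context: Conventions: $T_{3\frac12}$ = completely regular and $T_1$; $T_4$ = normal and $T_1$; $T_5$ = hereditarily normal (every subspace normal) and $T_1$. $\beta X$ denotes the Stone–Čech compactification of $X$. A one-point connectification of $X$ is a connected space $Y$ containing $X$ as a dense subspace with $Y\setminus X$ a singleton; two one-point connectifications are equivalent if there is a homeomorphism between them fixing every point of $X$, and equivalent ones are identified. A map $f:P\to Q$ between partially ordered sets is an anti-order-homomorphism if $a\le b$ implies $f(b)\le f(a)$; it is an anti-order-isomorphism if it is bijective and both $f$ and $f^{-1}$ are anti-order-homomorphisms. *)

From HB Require Import structures.
From mathcomp Require Import all_boot all_order all_algebra.
From mathcomp Require Import all_classical.
From mathcomp Require Import topology.
From mathcomp Require Import Rstruct Rstruct_topology.
From Stdlib Require Import Rdefinitions Raxioms.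

Set Implicit Arguments.
Unset Strict Implicit.
Unset Printing Implicit Defensive.

Local Open Scope classical_set_scope.

Definition T1_space (T : topologicalType) : Prop := accessible_space T.

Definition completely_regular (T : topologicalType) : Prop :=
  forall (x : T) (F : set T), closed F -> ~ F x ->
    exists f : T -> Rdefinitions.R,
      [/\ continuous f, f x = 0%R,
          (forall y, F y -> f y = 1%R) &
          (forall y, (0 <= f y)%R /\ (f y <= 1)%R)].

Definition hereditarily_normal (T : topologicalType) : Prop :=
  forall A : set T, normal_space (set_type A).

Inductive sep_index := T3half | T4 | T5.

Definition Ti (i : sep_index) (T : topologicalType) : Prop :=
  match i with
  | T3half => T1_space T /\ completely_regular T
  | T4 => T1_space T /\ normal_space T
  | T5 => T1_space T /\ hereditarily_normal T
  end.

Definition locally_connected (T : topologicalType) : Prop :=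
  forall (x : T) (U : set T), nbhs x U ->
    exists V : set T, [/\ open V, V x, V `<=` U & connected V].

Definition embedding (X Y : topologicalType) (e : X -> Y) : Prop :=
  [/\ continuous e, injective e &
      forall U : set X, open U ->
        exists V : set Y, open V /\ e @` U = V `&` range e].

Definition stone_cech (X B : topologicalType) (e : X -> B) : Prop :=
  [/\ compact [set: B], hausdorff_space B, embedding e,
      closure (range e) = [set: B] &
      forall (K : topologicalType) (f : X -> K),
        compact [set: K] -> hausdorff_space K -> continuous f ->
        exists g : B -> K, continuous g /\ g \o e = f].

Definition one_point_connectification (X Y : topologicalType) (e : X -> Y)
  : Prop :=
  [/\ embedding e, closure (range e) = [set: Y],
      (exists p : Y, ~ range e p /\ forall y, ~ range e y -> y = p) &
      connected [set: Y]].

Definition conn_le (X Y1 Y2 : topologicalType) (e1 : X -> Y1) (e2 : X -> Y2)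
  : Prop :=
  exists f : Y2 -> Y1, continuous f /\ f \o e2 = e1.

Definition conn_equiv (X Y1 Y2 : topologicalType) (e1 : X -> Y1) (e2 : X -> Y2)
  : Prop :=
  exists h : Y1 -> Y2,
    [/\ continuous h,
        (exists g : Y2 -> Y1, [/\ continuous g, cancel h g & cancel g h]) &
        h \o e1 = e2].

Definition Zfamily (X B : topologicalType) (e : X -> B) (Z : set B) : Prop :=
  [/\ Z `<=` ~` range e, compact Z &
      forall x : X,
        Z `&` closure (e @` connected_component [set: X] x) !=set0].

(* carrier of the quotient beta X / Z : None is the point z *)
Definition collapse (B : topologicalType) (Z : set B) : Type :=
  option (set_type (~` Z)).

HB.instance Definition _ (B : topologicalType) (Z : set B) :=
  Choice.copy (collapse Z) (option (set_type (~` Z))).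

Definition collapse_map (B : topologicalType) (Z : set B) (b : B)
  : collapse Z :=
  match pselect (Z b) with
  | left _ => None
  | right h => Some (SigSub (@mem_set _ (~` Z) b h))
  end.

Definition collapse_open (B : topologicalType) (Z : set B)
  (V : set (collapse Z)) : Prop :=
  open (collapse_map Z @^-1` V).

Section collapse_topology.
Context (B : topologicalType) (Z : set B).

Let copT : collapse_open [set: collapse Z].
Proof. by rewrite /collapse_open preimage_setT; exact: openT. Qed.

Let copI : setI_closed (@collapse_open B Z).
Proof. by move=> ? ? ? ?; exact: openI. Qed.

Let cop_bigU (I : Type) (f : I -> set (collapse Z)) :
  (forall i, collapse_open (f i)) -> collapse_open (\bigcup_i f i).
Proof.
by move=> ofi; rewrite /collapse_open preimage_bigcup;
  apply: bigcup_open => i _; exact: ofi.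
Qed.

HB.instance Definition _ := isOpenTopological.Build (collapse Z) copT copI cop_bigU.

End collapse_topology.

Definition zeta_map (X B : topologicalType) (e : X -> B) (Z : set B)
  (o : option X) : collapse Z :=
  match o with
  | None => None
  | Some x => collapse_map Z (e x)
  end.

(* zeta_X(Z) : option X with the topology induced by zeta_map, i.e. the
   subspace X u {z} of the quotient (zeta_map is injective for Z in Zfamily). *)
Notation zeta e Z := (initial_topology (zeta_map e Z)).

(* A neighbourhood of the new point z of zeta(Z) is, on X, a neighbourhood of
   Z in betaX. Hence zeta(Z) inherits its separation properties from those of X
   and of the compact space betaX, and it is connected because a clopen set
   containing z meets, through Z, the closure of every component of X.
   A continuous map zeta(Z1) -> zeta(Z2) fixing X must fix z, and then density
   of X in betaX forces Z1 to lie in Z2.  Conversely, a Tychonoff one-point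
   connectification X u {p} is zeta(Z) for the set Z of points of betaX adherent
   to V n X for every neighbourhood V of p: complete regularity of X u {p} and
   compactness of betaX identify the neighbourhoods of p with those of Z, and Z
   meets the closure of each component C of X since C is clopen (X is locally
   connected) and X u {p} is connected. *)

From HB Require Import structures.
From mathcomp Require Import all_boot all_order all_algebra.
From mathcomp Require Import all_classical.
From mathcomp Require Import reals topology normedtype.
From mathcomp Require Import Rstruct Rstruct_topology.
Import Order.TTheory GRing.Theory Num.Theory.

Set Implicit Arguments.
Unset Strict Implicit.
Unset Printing Implicit Defensive.

Local Open Scope classical_set_scope.
Local Notation RR := Rdefinitions.R.

Lemma closure_subset_closed (T : topologicalType) (A C : set T) :
  closed C -> A `<=` C -> closure A `<=` C.
Proof. by move=> cC /closureS; rewrite -(closure_id C).1. Qed.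

Lemma continuous_closure_image (S T : topologicalType) (f : S -> T)
    (A : set S) (x : S) :
  continuous f -> closure A x -> closure (f @` A) (f x).
Proof.
move=> cf clA N /cf /clA [s [As Ns]].
by exists (f s); split => //; exists s.
Qed.

Lemma closure_meets_open (T : topologicalType) (A W : set T) (b : T) :
  closure A b -> open W -> W b -> exists2 a, A a & W a.
Proof.
move=> clA oW Wb.
by have [a [Aa Wa]] := clA W (open_nbhs_nbhs (conj oW Wb)); exists a.
Qed.

Lemma closure_preimage_disjoint (S T : topologicalType) (f : S -> T)
    (A C : set T) :
  continuous f -> closure A `&` C = set0 ->
  closure (f @^-1` A) `&` f @^-1` C = set0.
Proof.
move=> cf AC; apply/seteqP; split => // x.
move=> [/(continuous_closure_image cf) clx Cx].
have /closureS/(_ _ clx) clAx : f @` (f @^-1` A) `<=` A by move=> _ [y Ay <-].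
by have : (closure A `&` C) (f x) by []; rewrite AC.
Qed.

Lemma dense_range_meets (S T : topologicalType) (e : S -> T)
    (W : set T) (b : T) :
  closure (range e) = [set: T] -> open W -> W b -> exists x, W (e x).
Proof.
move=> dense_e oW Wb; have : closure (range e) b by rewrite dense_e.
by move/closure_meets_open/(_ oW Wb) => [_ [x _ <-]]; exists x.
Qed.

Lemma hausdorff_closed_set1 (T : topologicalType) (x : T) :
  hausdorff_space T -> closed [set x].
Proof. by move=> /hausdorff_accessible/accessible_closed_set1; exact. Qed.
Arguments hausdorff_closed_set1 {T} x.

Lemma component_sub_clopen (T : topologicalType) (D : set T) (x : T) :
  open D -> closed D -> D x -> connected_component [set: T] x `<=` D.
Proof.
move=> oD cD Dx y Cy.
suff E : connected_component [set: T] x `&` D = connected_component [set: T] x.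
  by move: Cy; rewrite -E => -[].
apply: (@component_connected T setT x).
- by exists x; split => //; exact: connected_component_refl.
- by exists D.
- by exists D.
Qed.

Lemma locally_connected_component_open (T : topologicalType) (x : T) :
  locally_connected T -> open (connected_component [set: T] x).
Proof.
move=> lcT; rewrite openE => y Cy.
have [V [oV Vy _ cV]] := lcT y _ (@filterT _ (nbhs y) _).
apply: (filterS _ (open_nbhs_nbhs (conj oV Vy))).
rewrite (same_connected_component Cy).
exact: connected_component_max.
Qed.

Lemma normal_open_separation (T : topologicalType) : normal_space T ->
  forall A C : set T, closed A -> closed C -> A `&` C = set0 ->
  exists U V, [/\ open U, open V, A `<=` U, C `<=` V & U `&` V = set0].
Proof. exact: (@normal_openP RR T).1. Qed.

Section subspaces.
Context (T : topologicalType) (A : set T).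

Lemma closure_set_val_image (P : set (set_type A)) (p : set_type A) :
  closed P -> closure (set_val @` P) (set_val p) -> P p.
Proof.
move=> cP clp; apply: contrapT => nPp.
have [O oO hO] : open (~` P) by rewrite openC.
have Op : O (set_val p) by rewrite -[O _]/((set_val @^-1` O) p) hO.
have [_ [q Pq <-] Oq] := closure_meets_open clp oO Op.
by have : (~` P) q by rewrite -hO.
Qed.

Lemma hausdorff_set_type : hausdorff_space T -> hausdorff_space (set_type A).
Proof.
rewrite !open_hausdorff => hsT x y xy.
have /hsT [[U V] /= [Ux Vy] [oU oV /eqP UV]] : set_val x != set_val y.
  by apply: contra xy => /eqP/val_inj ->.
exists (set_val @^-1` U, set_val @^-1` V) => /=.
  by rewrite !inE; split; apply/set_mem.
split; [by exists U | by exists V |].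
by rewrite -preimage_setI UV preimage_set0.
Qed.

Lemma compact_set_type : compact A -> compact [set: set_type A].
Proof.
move=> cA; have [[a Aa]|A0] := pselect (A !=set0); last first.
  suff -> : [set: set_type A] = set0 by exact: compact0.
  apply/seteqP; split => // -[t At]; exfalso.
  by apply: A0; exists t; exact/set_mem.
(* A retraction of T onto A, continuous on A, maps A onto [set_type A]. *)
pose r (t : T) : set_type A := match pselect (A t) with
  | left At => exist _ t (mem_set At) | right _ => exist _ a (mem_set Aa) end.
have rK (t : set_type A) : r (set_val t) = t.
  case: t => t At; rewrite /r /=; case: pselect => [At'|]; last first.
    by move/(_ (set_mem At)).
  by congr exist; exact: Prop_irrelevance.
have rc : {within A, continuous r}.
  apply/subspace_sigL_continuousP.
  have -> : sigL A r = id by apply/funext => t; exact: rK.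
  by apply/continuousP => U oU.
suff <- : r @` A = [set: set_type A] by exact: continuous_compact.
by apply/seteqP; split => // t _; exists (set_val t); [exact/set_mem|exact: rK].
Qed.

End subspaces.

Section real_valued_separation.
Local Open Scope ring_scope.

Lemma normal_urysohn (T : topologicalType) : normal_space T ->
  forall A C : set T, closed A -> closed C -> A `&` C = set0 ->
  exists f : T -> RR, [/\ continuous f, (forall x, 0 <= f x <= 1),
     (forall x, A x -> f x = 0) & (forall x, C x -> f x = 1)].
Proof.
move=> nT A C cA cC AC.
have /(@uniform_separatorP T RR) [f [cf f01 fA fC]] :=
  (@normal_separatorP RR T).1 nT A C cA cC AC.
exists f; split => //.
- by move=> x; have := f01 (f x) (imageT _ _); rewrite /= in_itv.
- by move=> x Ax; apply: fA; exists x.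
- by move=> x Cx; apply: fC; exists x.
Qed.

Lemma completely_regularP (T : topologicalType) :
  completely_regular T <->
  forall (x : T) (F : set T), closed F -> ~ F x ->
    exists f : T -> RR, [/\ continuous f, (forall y, 0 <= f y <= 1),
      f x = 0 & forall y, F y -> f y = 1].
Proof.
split=> crT x F cF nFx.
- have [f [cf fx fF f01]] := crT x F cF nFx.
  exists f; split => // y; have [f0 f1] := f01 y.
  by apply/andP; split; apply/RleP.
- have [f [cf f01 fx fF]] := crT x F cF nFx.
  exists f; split => // y; have /andP[f0 f1] := f01 y.
  by split; apply/RleP.
Qed.

Lemma normal_accessible_completely_regular (T : topologicalType) :
  accessible_space T -> normal_space T -> completely_regular T.
Proof.
move=> aT nT; apply/completely_regularP => x F cF nFx.
have xF : [set x] `&` F = set0 by apply/seteqP; split => // y [/= ->].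
have [f [cf f01 fx fF]] :=
  normal_urysohn nT (@accessible_closed_set1 T aT x) cF xF.
by exists f; split => //; exact: fx.
Qed.

Lemma stone_cech_extend01 (X B : topologicalType) (e : X -> B)
    (g : X -> RR) :
  stone_cech e -> continuous g -> (forall x, 0 <= g x <= 1) ->
  exists G : B -> RR, continuous G /\ forall x, G (e x) = g x.
Proof.
case=> _ _ _ _ ext cg g01.
pose I01 := set_type (`[0, 1]%classic : set RR).
have gI x : g x \in (`[0, 1]%classic : set RR) by rewrite inE /= in_itv /=.
pose g' (x : X) : I01 := exist _ (g x) (gI x).
have cg' : continuous g'.
  by apply/continuousP => _ [A oA <-]; move/continuousP: cg; apply.
have [|||G [cG GE]] := ext I01 g'.
- exact/compact_set_type/segment_compact.
- exact/hausdorff_set_type/Rhausdorff.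
- exact: cg'.
exists (set_val \o G); split.
  by move=> b; apply: continuous_comp; [exact: cG | exact: initial_continuous].
by move=> x; have := congr1 (fun h => set_val (h x)) GE.
Qed.

End real_valued_separation.

Definition completely_normal (T : topologicalType) :=
  forall S1 S2 : set T, closure S1 `&` S2 = set0 -> S1 `&` closure S2 = set0 ->
  exists U V, [/\ open U, open V, S1 `<=` U, S2 `<=` V & U `&` V = set0].

Lemma completely_normal_normal (T : topologicalType) :
  completely_normal T -> normal_space T.
Proof.
move=> cn; apply/(@normal_openP RR) => A C cA cC AC; apply: cn.
- by rewrite -((closure_id A).1 cA).
- by rewrite -((closure_id C).1 cC).
Qed.

Lemma completely_normal_hereditarily_normal (T : topologicalType) :
  completely_normal T -> hereditarily_normal T.
Proof.
move=> cn A; apply/(@normal_openP RR) => P1 P2 cP1 cP2 P12.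
have sep (P Q : set (set_type A)) : closed P -> P `&` Q = set0 ->
    closure (set_val @` P) `&` set_val @` Q = set0.
  move=> cP PQ; apply/seteqP; split => // _ [/[swap] -[q Qq <-]].
  move/(closure_set_val_image cP) => Pq.
  by have : (P `&` Q) q by []; rewrite PQ.
have sep21 : set_val @` P1 `&` closure (set_val @` P2) = set0.
  by rewrite setIC; apply: sep; rewrite // setIC.
have [U [V [oU oV P1U P2V UV]]] := cn _ _ (sep _ _ cP1 P12) sep21.
exists (set_val @^-1` U), (set_val @^-1` V); split.
- by exists U.
- by exists V.
- by move=> p P1p; apply: P1U; exists p.
- by move=> p P2p; apply: P2V; exists p.
- by rewrite -preimage_setI UV preimage_set0.
Qed.

Lemma hereditarily_normal_completely_normal (T : topologicalType) :
  hereditarily_normal T -> completely_normal T.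
Proof.
move=> hn S1 S2 h1 h2.
pose A := ~` (closure S1 `&` closure S2).
have oA : open A by rewrite openC; apply: closedI; exact: closed_closure.
have inA1 s : S1 s -> A s.
  by move=> S1s [_ c2]; rewrite -[False]/(set0 s) -h2.
have inA2 s : S2 s -> A s.
  by move=> S2s [c1 _]; rewrite -[False]/(set0 s) -h1.
have cl (S : set T) : closed (set_val @^-1` closure S : set (set_type A)).
  apply: (continuous_closedP _).1; first exact: initial_continuous.
  exact: closed_closure.
have [] := normal_open_separation (hn A) (cl S1) (cl S2).
- by apply/seteqP; split => // p; have := set_mem (valP p); apply.
move=> _ [_ [[U0 oU0 <-] [V0 oV0 <-] S1U S2V /seteqP[UV _]]].
exists (U0 `&` A), (V0 `&` A); split; try exact: openI.
- move=> s S1s; split; last exact: inA1.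
  by apply: (S1U (exist _ s (mem_set (inA1 s S1s)))); exact: subset_closure.
- move=> s S2s; split; last exact: inA2.
  by apply: (S2V (exist _ s (mem_set (inA2 s S2s)))); exact: subset_closure.
- apply/seteqP; split => // y [[U0y Ay] [V0y _]].
  exact: (UV (exist _ y (mem_set Ay))).
Qed.

Definition zeta_set (X B : Type) (e : X -> B) (W : set B) (n : Prop) :
  set (option X) := fun o => if o is Some x then W (e x) else n.

Definition zeta_lift (X B T : Type) (e : X -> B) (g : B -> T) (c : T)
  (o : option X) : T := if o is Some x then g (e x) else c.

Section zeta_topology.
Local Open Scope ring_scope.
Context (X B : topologicalType) (e : X -> B) (Z : set B).

Lemma open_zeta_set (W : set B) (n : Prop) :
  open W -> (forall b, Z b -> (n <-> W b)) ->
  open (zeta_set e W n : set (zeta e Z)).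
Proof.
move=> oW WZ.
pose V (c : collapse Z) := if c is Some b then W (set_val b) else n.
have VW : collapse_map Z @^-1` V = W.
  apply/seteqP; split => b; rewrite /collapse_map /preimage /=;
    case: pselect => [Zb|nZb] //=; by have [] := WZ b Zb.
exists V; first by rewrite /open /= /collapse_open VW.
apply/seteqP; split => -[x|] //=; rewrite /preimage /=;
  by have -> : V (collapse_map Z (e x)) = W (e x) by rewrite -VW.
Qed.

Lemma open_zetaP (U : set (zeta e Z)) : open U <->
  exists W, [/\ open W, U = zeta_set e W (U None) &
                forall b, Z b -> (U None <-> W b)].
Proof.
split; last by case=> W [oW UW WZ]; rewrite UW; exact: open_zeta_set.
case=> V oV <-; exists (collapse_map Z @^-1` V); split => //.
- by apply/seteqP; split => -[x|].
- by move=> b Zb; rewrite /preimage /= /collapse_map; case: pselect.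
Qed.

Lemma open_zeta_None (U : set (zeta e Z)) : open U -> U None ->
  exists W, [/\ open W, Z `<=` W & forall x, W (e x) -> U (Some x)].
Proof.
move=> /open_zetaP [W [oW UW WZ]] UN; exists W; split => //.
- by move=> b Zb; apply/(WZ b Zb).
- by move=> x Wx; rewrite UW.
Qed.

Hypothesis ZX : Z `<=` ~` range e.

Lemma e_notin_Z x : ~ Z (e x).
Proof. by move=> /ZX; apply; exists x. Qed.

Hypothesis cZ : closed Z.
Hypothesis embe : embedding e.

Lemma continuous_Some : continuous (Some : X -> zeta e Z).
Proof.
apply/continuousP => U /open_zetaP [W [oW -> _]].
by case: embe => /continuousP + _ _; apply.
Qed.

Lemma open_Some_image (N : set X) :
  open N -> open (Some @` N : set (zeta e Z)).
Proof.
move=> oN; case: embe => _ inje /(_ N oN) [M [oM NM]].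
suff -> : (Some @` N : set (zeta e Z)) = zeta_set e (M `&` ~` Z) False.
  apply: open_zeta_set => [|b Zb]; last by split => -[].
  by apply: openI => //; rewrite openC.
apply/seteqP; split => -[x|] //=.
- case=> y Ny [<-]; split; last exact: e_notin_Z.
  have : (e @` N) (e y) by exists y.
  by rewrite NM => -[].
- by case.
- move=> [Mx _]; have : (M `&` range e) (e x) by split => //; exists x.
  by rewrite -NM => -[y Ny /inje yx]; exists y; rewrite // yx.
Qed.

Lemma zeta_lift_continuous (T : topologicalType) (g : B -> T) (c : T) :
  continuous g -> (forall b, Z b -> g b = c) ->
  continuous (zeta_lift e g c : zeta e Z -> T).
Proof.
move=> cg gZ; apply/continuousP => A oA.
have -> : zeta_lift e g c @^-1` A = zeta_set e (g @^-1` A) (A c).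
  by apply/seteqP; split => -[x|].
apply: open_zeta_set; first by move/continuousP: cg; apply.
by move=> b Zb; rewrite /preimage /= gZ.
Qed.

Hypothesis hsB : hausdorff_space B.

Lemma zeta_T1 : T1_space (zeta e Z).
Proof.
case: embe => _ inje _.
move=> [x|] [y|] // xy.
- exists (zeta_set e (~` [set e y] `&` ~` Z) False); split.
  + apply: open_zeta_set => [|b Zb]; last by split => -[].
    by apply: openI; rewrite openC //; exact: hausdorff_closed_set1.
  + rewrite inE /=; split; last exact: e_notin_Z.
    by move=> /inje exy; move: xy; rewrite exy eqxx.
  + by rewrite inE /= => -[].
- exists (zeta_set e (~` Z) False); split.
  + by apply: open_zeta_set => [|b Zb]; [rewrite openC | split].
  + by rewrite inE /=; apply: e_notin_Z.
  + by rewrite inE.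
- exists (zeta_set e (~` [set e y]) True); split.
  + apply: open_zeta_set; first by rewrite openC; exact: hausdorff_closed_set1.
    by move=> b Zb; split => // _ eb; apply: (ZX Zb); exists y.
  + by rewrite inE.
  + by rewrite inE /= => /(_ erefl).
Qed.

Hypothesis nB : normal_space B.

Lemma zeta_completely_regular : completely_regular (zeta e Z).
Proof.
apply/completely_regularP => o F cF nFo.
have /open_zetaP [W [oW FE WZ]] : open (~` F) by rewrite openC.
have FW y : F (Some y) -> ~ W (e y).
  by move=> Fy Wy; have : (~` F) (Some y) by rewrite FE.
have lift01 (g : B -> RR) c : (forall b, 0 <= g b <= 1) -> 0 <= c <= 1 ->
    forall o, 0 <= zeta_lift e g c o <= 1 by move=> g01 c01 [x|] /=.
case: o nFo => [x0|] nFo.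
- have Wx0 : W (e x0) by have : (~` F) (Some x0) := nFo; rewrite FE.
  have dj : [set e x0] `&` (~` W `|` Z) = set0.
    by apply/seteqP; split => // b [/= -> [|/e_notin_Z]].
  have [g [cg g01 g0 g1]] :=
    normal_urysohn nB (hausdorff_closed_set1 (e x0) hsB)
      (closedU (open_closedC oW) cZ) dj.
  exists (zeta_lift e g 1); split.
  + by apply: zeta_lift_continuous => // b Zb; apply: g1; right.
  + by apply: lift01; rewrite // ler01 lexx.
  + exact: g0.
  + by case=> [y /FW Wy|//]; apply: g1; left.
- have dj : Z `&` ~` W = set0.
    by apply/seteqP; split => // b [Zb]; apply; apply/(WZ b Zb).
  have [g [cg g01 g0 g1]] := normal_urysohn nB cZ (open_closedC oW) dj.
  exists (zeta_lift e g 0); split => //.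
  + by apply: zeta_lift_continuous => // b Zb; apply: g0.
  + by apply: lift01; rewrite // lexx ler01.
  + by case=> [y /FW Wy|//]; apply: g1.
Qed.

(* Near z, the separation of the traces on X is completed by separating Z from
   the trace of S2 in betaX, which is possible since z is not adherent to S2. *)
Lemma zeta_separation (S1 S2 : set (zeta e Z)) (U' V' : set X) :
  open U' -> open V' -> Some @^-1` S1 `<=` U' -> Some @^-1` S2 `<=` V' ->
  U' `&` V' = set0 -> ~ closure S2 None ->
  exists U V, [/\ open U, open V, S1 `<=` U, S2 `<=` V & U `&` V = set0].
Proof.
move=> oU' oV' S1U' S2V' UV' nS2.
have [W [oW ZW WS2]] : exists W, [/\ open W, Z `<=` W &
    forall x, W (e x) -> (~` closure S2) (Some x)].
  by apply: open_zeta_None => //; rewrite openC; exact: closed_closure.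
have ZS2 : Z `&` closure (e @` (Some @^-1` S2)) = set0.
  apply/seteqP; split => // b [/ZW Wb /closure_meets_open /(_ oW Wb)].
  by case=> _ [x S2x <-] /WS2; apply; exact: subset_closure.
have [U0 [V0 [oU0 oV0 ZU0 S2V0 UV0]]] :=
  normal_open_separation nB cZ (@closed_closure _ _) ZS2.
have ce : continuous e by case: embe.
exists ((Some @` U' : set (zeta e Z)) `|` zeta_set e U0 True),
  (Some @` (V' `&` e @^-1` V0) : set (zeta e Z)); split.
- apply: openU; first exact: open_Some_image.
  by apply: open_zeta_set => // b Zb; split => // _; exact: ZU0.
- by apply/open_Some_image/openI => //; move/continuousP: ce; apply.
- by case=> [s S1s|_]; [left; exists s => //; exact: S1U' | right].
- case=> [s S2s|S2N]; last by case: nS2; exact: subset_closure.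
  exists s => //; split; first exact: S2V'.
  by apply: S2V0; apply: subset_closure; exists s.
- apply/seteqP; split => // o [Uo [x [V'x V0x] xo]]; subst o.
  case: Uo => [[u U'u [ux]]|/= U0x].
  + by subst u; have : (U' `&` V') x by []; rewrite UV'.
  + by have : (U0 `&` V0) (e x) by []; rewrite UV0.
Qed.

Lemma zeta_normal : normal_space X -> normal_space (zeta e Z).
Proof.
move=> nX; apply/(@normal_openP RR) => A C cA cC AC.
wlog nC : A C cA cC AC / ~ C None.
  move=> sep; have [CN|] := pselect (C None); last exact: sep.
  have nA : ~ A None by move=> AN; have : (A `&` C) None by []; rewrite AC.
  have CA : C `&` A = set0 by rewrite setIC.
  have [U [V [oU oV CU AV UV]]] := sep C A cC cA CA nA.
  by exists V, U; split; rewrite // setIC.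
have cS (S : set (zeta e Z)) : closed S -> closed (Some @^-1` S : set X).
  by move=> cS; apply: (continuous_closedP _).1 continuous_Some _ cS.
have [|U' [V' [oU' oV' AU' CV' UV']]] :=
  normal_open_separation nX (cS _ cA) (cS _ cC).
  by rewrite -preimage_setI AC preimage_set0.
by apply: (zeta_separation oU' oV' AU' CV' UV'); rewrite -(closure_id C).1.
Qed.

Lemma zeta_completely_normal :
  completely_normal X -> completely_normal (zeta e Z).
Proof.
move=> cnX S1 S2 h1 h2.
have h2' : Some @^-1` S1 `&` closure (Some @^-1` S2 : set X) = set0.
  rewrite setIC; apply: closure_preimage_disjoint continuous_Some _.
  by rewrite setIC.
have [U' [V' [oU' oV' S1U' S2V' UV']]] :=
  cnX _ _ (closure_preimage_disjoint continuous_Some h1) h2'.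
have [S1N|nS1] := pselect (S1 None).
  apply: (zeta_separation oU' oV' S1U' S2V' UV') => S2N.
  by have : (S1 `&` closure S2) None by []; rewrite h2.
have [S2N|nS2] := pselect (S2 None).
  have [||U [V [oU oV S2U S1V UV]]] := zeta_separation oV' oU' S2V' S1U'.
  - by rewrite setIC.
  - by move=> S1N; have : (closure S1 `&` S2) None by []; rewrite h1.
  by exists V, U; split; rewrite // setIC.
exists (Some @` U' : set (zeta e Z)), (Some @` V' : set (zeta e Z)); split.
- exact: open_Some_image.
- exact: open_Some_image.
- by case=> [s S1s|//]; exists s => //; exact: S1U'.
- by case=> [s S2s|//]; exists s => //; exact: S2V'.
- apply/seteqP; split => // _ [[u U'u <-] [v V'v [vu]]]; subst v.
  by have : (U' `&` V') u by []; rewrite UV'.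
Qed.

Hypothesis dense_e : closure (range e) = [set: B].

Hypothesis Z0 : Z !=set0.

Lemma zeta_dense : closure (range (Some : X -> zeta e Z)) = [set: zeta e Z].
Proof.
apply/seteqP; split => // -[x|] _; first by apply: subset_closure; exists x.
move=> N; rewrite nbhsE => -[O [oO ON] ON'].
have [W [oW ZW WO]] := open_zeta_None oO ON.
have [b Zb] := Z0; have [x Wx] := dense_range_meets dense_e oW (ZW b Zb).
by exists (Some x); split; [exists x | exact/ON'/WO].
Qed.

Hypothesis Z_component :
  forall x, Z `&` closure (e @` connected_component [set: X] x) !=set0.

Lemma zeta_clopen_None (S : set (zeta e Z)) :
  open S -> closed S -> S None -> S = [set: zeta e Z].
Proof.
move=> oS cS SN; apply/seteqP; split => // -[x _|//]; apply: contrapT => nSx.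
have oSX : open (Some @^-1` S : set X).
  by move/continuousP: continuous_Some; apply.
have cSX : closed (Some @^-1` S : set X).
  exact: (continuous_closedP _).1 continuous_Some _ cS.
have /component_sub_clopen Cx : (~` (Some @^-1` S)) x by [].
have [b [Zb /closure_meets_open clb]] := Z_component x.
have [W [oW ZW WS]] := open_zeta_None oS SN.
have [_ [c Cc <-] Wc] := clb W oW (ZW b Zb).
by apply: (Cx _ _ c Cc); [rewrite openC | exact: open_closedC | exact: WS].
Qed.

Lemma zeta_connected : connected [set: zeta e Z].
Proof.
move=> S [o So] [C1 oC1 S1] [C2 cC2 S2].
rewrite setTI in S1; rewrite setTI in S2.
have oS : open S by rewrite S1.
have cS : closed S by rewrite S2.
have [SN|nSN] := pselect (S None); first exact: zeta_clopen_None.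
have oSC : open (~` S) by rewrite openC.
have /zeta_clopen_None : closed (~` S) by exact: open_closedC.
by move=> /(_ oSC nSN) /seteqP[_ /(_ o I)].
Qed.

Lemma zeta_one_point_connectification :
  one_point_connectification (Some : X -> zeta e Z).
Proof.
split; [split | exact: zeta_dense | | exact: zeta_connected].
- exact: continuous_Some.
- by move=> x y [].
- move=> U oU; exists (Some @` U); split; first exact: open_Some_image.
  apply/seteqP; split => [_ [x Ux <-]|_ [[x Ux <-] _]]; last by exists x.
  by split; exists x.
- exists None; split; first by case.
  by case=> [x /(_ (imageT _ x))|].
Qed.

End zeta_topology.

Section zeta_order.
Context (X B : topologicalType) (e : X -> B) (Z1 Z2 : set B).

Lemma conn_le_zeta_of_subset : Z1 `<=` Z2 ->
  conn_le (Some : X -> zeta e Z2) (Some : X -> zeta e Z1).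
Proof.
move=> Z12; exists (id : zeta e Z1 -> zeta e Z2); split => //.
apply/continuousP => U /open_zetaP [W [oW UW WZ]]; rewrite UW.
by apply: open_zeta_set => // b /Z12; exact: WZ.
Qed.

Hypothesis hsB : hausdorff_space B.
Hypothesis nB : normal_space B.
Hypothesis dense_e : closure (range e) = [set: B].
Hypotheses (cZ1 : closed Z1) (cZ2 : closed Z2).
Hypotheses (Z1X : Z1 `<=` ~` range e) (Z2X : Z2 `<=` ~` range e).

Section zeta_map.
Variable f : zeta e Z1 -> zeta e Z2.
Hypotheses (cf : continuous f) (fSome : f \o Some = Some).

Lemma zeta_map_trace (O : set (zeta e Z2)) (U : set B) (b : B) :
  open O -> O (f None) -> Z1 b -> open U -> U b ->
  exists2 x, U (e x) & O (Some x).
Proof.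
move=> oO Of Z1b oU Ub.
have [|W [oW Z1W WO]] := @open_zeta_None _ _ e Z1 (f @^-1` O) _ Of.
  by move/continuousP: cf; apply.
have [x [Wx Ux]] :=
  dense_range_meets dense_e (openI oW oU) (conj (Z1W b Z1b) Ub).
have fx : f (Some x) = Some x := congr1 (fun g => g x) fSome.
by exists x => //; rewrite -fx; exact: WO.
Qed.

Hypothesis Z1_0 : Z1 !=set0.

Lemma zeta_map_None : f None = None.
Proof.
case E : (f None) => [y|] //; exfalso.
have dj : [set e y] `&` (Z1 `|` Z2) = set0.
  by apply/seteqP; split => // b [/= -> [/Z1X|/Z2X]]; apply; exists y.
have [U [V [oU oV yU ZV UV]]] := normal_open_separation nB
  (hausdorff_closed_set1 (e y) hsB) (closedU cZ1 cZ2) dj.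
have oO : open (zeta_set e U False : set (zeta e Z2)).
  apply: open_zeta_set => // b Z2b; split => // Ub.
  by rewrite -[False]/(set0 b) -UV; split => //; apply: ZV; right.
have OfN : zeta_set e U False (f None) by rewrite E; apply: yU.
have [b Z1b] := Z1_0.
have [x Vx /= Ux] := zeta_map_trace oO OfN Z1b oV (ZV b (or_introl Z1b)).
by rewrite -[False]/(set0 (e x)) -UV.
Qed.

Lemma zeta_map_subset : Z1 `<=` Z2.
Proof.
move=> b Z1b; apply: contrapT => nZ2b.
have bZ2 : [set b] `&` Z2 = set0 by apply/seteqP; split => // c [/= ->].
have [U [V [oU oV bU ZV UV]]] :=
  normal_open_separation nB (hausdorff_closed_set1 b hsB) cZ2 bZ2.
have oO : open (zeta_set e V True : set (zeta e Z2)).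
  by apply: open_zeta_set => // c Z2c; split => // _; exact: ZV.
have OfN : zeta_set e V True (f None) by rewrite zeta_map_None.
have [x Ux /= Vx] := zeta_map_trace oO OfN Z1b oU (bU b erefl).
by rewrite -[False]/(set0 (e x)) -UV.
Qed.

End zeta_map.

Lemma zeta_leP : Z1 !=set0 ->
  Z1 `<=` Z2 <-> conn_le (Some : X -> zeta e Z2) (Some : X -> zeta e Z1).
Proof.
move=> Z1_0; split; first exact: conn_le_zeta_of_subset.
by case=> f [cf fSome]; exact: zeta_map_subset cf fSome Z1_0.
Qed.

End zeta_order.

Section connectification_trace.
Local Open Scope ring_scope.
Context (X B Y : topologicalType) (e : X -> B) (eY : X -> Y) (p : Y).
Hypothesis scB : stone_cech e.
Hypotheses (T1Y : accessible_space Y) (crY : completely_regular Y).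
Hypotheses (embY : embedding eY) (np : ~ range eY p).
Hypothesis pu : forall y, ~ range eY y -> y = p.

Definition point_trace : set B := fun b =>
  forall V : set Y, open V -> V p -> closure (e @` (eY @^-1` V)) b.

Lemma connectification_cases y : y = p \/ exists x, y = eY x.
Proof.
have [[x _ <-]|/pu] := pselect (range eY y); [by right; exists x | by left].
Qed.

Lemma open_eY_image (N : set X) : open N -> open (eY @` N).
Proof.
have oR : open (range eY).
  suff -> : range eY = ~` [set p].
    by rewrite openC; exact: accessible_closed_set1.
  apply/seteqP; split => [y ry yp|y]; first by apply: np; rewrite -yp.
  by case: (connectification_cases y) => [->|[x ->]] // /(_ erefl).
by move=> oN; case: embY => _ _ /(_ N oN) [M [oM ->]]; apply: openI.
Qed.

Lemma point_trace_sub (G : B -> RR) (K : set RR) (V : set Y) :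
  continuous G -> closed K -> open V -> V p ->
  (forall x, V (eY x) -> K (G (e x))) -> point_trace `<=` G @^-1` K.
Proof.
move=> cG cK oV Vp VK b /(_ V oV Vp); apply: closure_subset_closed.
  exact: (continuous_closedP _).1 cG _ cK.
by move=> _ [x Vx <-]; exact: VK.
Qed.

Lemma urysohn_extension (y : Y) (F : set Y) : closed F -> ~ F y ->
  exists (g : Y -> RR) (G : B -> RR),
    [/\ continuous g, continuous G, (forall x, G (e x) = g (eY x)),
        g y = 0 & forall z, F z -> g z = 1].
Proof.
move=> cF nFy.
have [g [cg g01 gy gF]] := (completely_regularP Y).1 crY y F cF nFy.
have ceY : continuous eY by case: embY.
have [|G [cG Ge]] :=
  stone_cech_extend01 (g := g \o eY) scB _ (fun x => g01 (eY x)).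
  by move=> x; apply: continuous_comp; [exact: ceY | exact: cg].
by exists g, G.
Qed.

Lemma point_trace_remainder : point_trace `<=` ~` range e.
Proof.
move=> b Zb [x _ xb]; subst b.
have nFx : ~ [set p] (eY x) by move=> /= xp; apply: np; exists x.
have [g [G [cg cG Ge gx gp]]] :=
  urysohn_extension (@accessible_closed_set1 _ T1Y p) nFx.
pose V := g @^-1` [set r | 2^-1 < r].
have oV : open V by move/continuousP: cg; apply; exact: open_gt.
have Vp : V p by rewrite /V /preimage /= gp // invf_lt1 // ltr1n.
have VG x' : V (eY x') -> 2^-1 <= G (e x') by rewrite Ge => /ltW.
have := point_trace_sub cG (@closed_ge _ (2^-1 : RR)) oV Vp VG Zb.
by rewrite /preimage /= Ge gx leNgt invr_gt0 ltr0n.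
Qed.

Lemma point_trace_compact : compact point_trace.
Proof.
have [cB _ _ _ _] := scB; apply: subclosed_compact cB _ => //.
have -> : point_trace = \bigcap_(V in [set V | open V /\ V p])
    closure (e @` (eY @^-1` V)).
  by apply/seteqP; split => [b Zb V [oV Vp]|b Zb V oV Vp]; exact: Zb.
by apply: closed_bigI => V _; exact: closed_closure.
Qed.

Lemma point_trace_cluster (S : set X) :
  (forall V, open V -> V p -> exists2 x, V (eY x) & S x) ->
  exists2 b, point_trace b & closure (e @` S) b.
Proof.
move=> VS; have [cB _ _ _ _] := scB.
pose F := filter_from [set V | open V /\ V p]
  (fun V => e @` (eY @^-1` V `&` S)).
have PF : ProperFilter F.
  apply: filter_from_proper; last first.
    by move=> V [oV Vp]; have [x Vx Sx] := VS V oV Vp; exists (e x), x.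
  apply: filter_from_filter; first by exists setT; split => //; exact: openT.
  move=> V1 V2 [oV1 V1p] [oV2 V2p]; exists (V1 `&` V2).
    by split; [exact: openI|].
  by move=> _ [x [[V1x V2x] Sx] <-]; split; exists x.
have FV V : open V -> V p -> F (e @` (eY @^-1` V `&` S)) by exists V.
have [b [_ clb]] := cB F PF filterT.
exists b => [V oV Vp N nN|N nN].
- have [_ [[x [Vx _] <-] Nx]] := clb _ _ (FV V oV Vp) nN.
  by exists (e x); split => //; exists x.
- have [_ [[x [_ Sx] <-] Nx]] := clb _ _ (FV setT openT I) nN.
  by exists (e x); split => //; exists x.
Qed.

Hypothesis conY : connected [set: Y].
Hypothesis lcX : locally_connected X.

(* Otherwise eY @` C would be a nonempty proper clopen subset of Y. *)
Lemma nbhs_point_meets_component (V : set Y) (x : X) : open V -> V p ->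
  exists2 x', V (eY x') & connected_component [set: X] x x'.
Proof.
set C := connected_component [set: X] x => oV Vp; apply: contrapT => VC.
have CV c : C c -> ~ V (eY c) by move=> Cc Vc; apply: VC; exists c.
have oC : open C := locally_connected_component_open x lcX.
have cCY : closed (eY @` C).
  move=> y; case: (connectification_cases y) => [->|[x' ->]] cly.
    have [_ [c Cc <-] Vc] := closure_meets_open cly oV Vp.
    by case: (CV c Cc).
  exists x' => //; apply: contrapT => nCx'.
  have oCY : open (eY @` ~` C) by apply: open_eY_image; rewrite openC;
    exact: component_closed closedT.
  have [_ inj_eY _] := embY.
  have [_ [c Cc <-] [c' nCc' /inj_eY c'c]] :=
    closure_meets_open cly oCY (ex_intro2 _ _ x' nCx' erefl).
  by apply: nCc'; rewrite c'c.
have CY : eY @` C = [set: Y].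
  apply: conY.
  - by exists (eY x), x => //; exact: connected_component_refl.
  - by exists (eY @` C); [exact: open_eY_image | rewrite setTI].
  - by exists (eY @` C); rewrite ?setTI.
have [c _ cp] : (eY @` C) p by rewrite CY.
by apply: np; exists c.
Qed.

Lemma point_trace_component (x : X) :
  point_trace `&` closure (e @` connected_component [set: X] x) !=set0.
Proof.
have [|b Zb clb] := @point_trace_cluster (connected_component [set: X] x).
  by move=> V oV Vp; exact: nbhs_point_meets_component.
by exists b.
Qed.

Lemma trace_nbhs_of_nbhs_point (U : set Y) : open U -> U p ->
  exists W, [/\ open W, point_trace `<=` W & forall x, W (e x) -> U (eY x)].
Proof.
move=> oU Up; have nCUp : ~ (~` U) p by [].
have [g [G [cg cG Ge gp gU]]] := urysohn_extension (open_closedC oU) nCUp.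
exists (G @^-1` [set r | r < 1]); split.
- by move/continuousP: cG; apply; exact: open_lt.
- pose V := g @^-1` [set r | r < 2^-1].
  have oV : open V by move/continuousP: cg; apply; exact: open_lt.
  have Vp : V p by rewrite /V /preimage /= gp invr_gt0 ltr0n.
  have VG x : V (eY x) -> G (e x) <= 2^-1 by rewrite Ge => /ltW.
  move=> b /(point_trace_sub cG (@closed_le _ (2^-1 : RR)) oV Vp VG) /= Gb.
  by apply: le_lt_trans Gb _; rewrite invf_lt1 // ltr1n.
- move=> x; rewrite /preimage /= Ge => gx; apply: contrapT => nUx.
  by move: gx; rewrite gU // ltxx.
Qed.

Lemma nbhs_point_of_trace_nbhs (W : set B) : open W -> point_trace `<=` W ->
  exists V, [/\ open V, V p & forall x, V (eY x) -> W (e x)].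
Proof.
move=> oW ZW; apply: contrapT => noV.
have [|b Zb clb] := @point_trace_cluster (e @^-1` ~` W).
  move=> V oV Vp; apply: contrapT => nVx.
  apply: noV; exists V; split => // x Vx.
  by apply: contrapT => nWx; apply: nVx; exists x.
have sub : e @` (e @^-1` ~` W) `<=` ~` W by move=> _ [x nWx <-].
exact: (closure_subset_closed (open_closedC oW) sub clb) (ZW b Zb).
Qed.

Definition zeta_to_connectification (o : zeta e point_trace) : Y :=
  if o is Some x then eY x else p.

Definition connectification_to_zeta (y : Y) : zeta e point_trace :=
  if pselect (range eY y) is left ry then Some (s2val (cid2 ry)) else None.

Lemma connectification_to_zeta_eY x :
  connectification_to_zeta (eY x) = Some x.
Proof.
rewrite /connectification_to_zeta; case: pselect => [ry|]; last first.
  by case; exists x.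
have [_ inj_eY _] := embY.
by case: cid2 => x' _ /= /inj_eY ->.
Qed.

Lemma connectification_to_zeta_p : connectification_to_zeta p = None.
Proof. by rewrite /connectification_to_zeta; case: pselect. Qed.

Let closed_point_trace : closed point_trace.
Proof.
by have [_ hsB _ _ _] := scB; exact: compact_closed hsB point_trace_compact.
Qed.

Let open_Some_trace (N : set X) : open N ->
  open (Some @` N : set (zeta e point_trace)).
Proof.
have [_ _ embe _ _] := scB.
exact: (open_Some_image point_trace_remainder closed_point_trace embe).
Qed.

Lemma zeta_to_connectification_continuous :
  continuous zeta_to_connectification.
Proof.
have ceY : continuous eY by case: embY.
apply/continuousP => U oU.
have oUX : open (eY @^-1` U) by move/continuousP: ceY; apply.
have [Up|nUp] := pselect (U p); last first.
  suff -> : zeta_to_connectification @^-1` U = Some @` (eY @^-1` U).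
    exact: open_Some_trace.
  by apply/seteqP; split => -[x|] //=; [exists x | case=> x' ? [<-] | case].
have [W [oW ZW WU]] := trace_nbhs_of_nbhs_point oU Up.
suff -> : zeta_to_connectification @^-1` U =
    zeta_set e W True `|` Some @` (eY @^-1` U).
  apply: openU; last exact: open_Some_trace.
  by apply: open_zeta_set => // b Zb; split => // _; exact: ZW.
apply/seteqP; split => -[x|] //=; first by right; exists x.
- by left.
- by case=> [/WU|[x' Ux' [<-]]].
Qed.

Lemma connectification_to_zeta_continuous :
  continuous connectification_to_zeta.
Proof.
have [_ _ [ce _ _] _ _] := scB; have [_ inj_eY _] := embY.
apply/continuousP => U /open_zetaP [W [oW UW ZW]].
have oWY : open (eY @` (e @^-1` W)).
  by apply: open_eY_image; move/continuousP: ce; apply.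
have UeY x : U (connectification_to_zeta (eY x)) = W (e x).
  by rewrite connectification_to_zeta_eY UW.
have [UN|nUN] := pselect (U None); last first.
  suff -> : connectification_to_zeta @^-1` U = eY @` (e @^-1` W) by [].
  apply/seteqP; split => y; case: (connectification_cases y) => [->|[x ->]].
  - by rewrite /preimage /= connectification_to_zeta_p.
  - by rewrite /preimage /= UeY => Wx; exists x.
  - by case=> x _ xp; case: np; exists x.
  - by case=> x' Wx' /inj_eY <-; rewrite /preimage /= UeY.
have [V [oV Vp VW]] :=
  nbhs_point_of_trace_nbhs oW (fun b Zb => (ZW b Zb).1 UN).
suff -> : connectification_to_zeta @^-1` U = V `|` eY @` (e @^-1` W).
  exact: openU.
apply/seteqP; split => y; case: (connectification_cases y) => [->|[x ->]].
- by left.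
- by rewrite /preimage /= UeY => Wx; right; exists x.
- by rewrite /preimage /= connectification_to_zeta_p.
- by case=> [/VW|[x' Wx' /inj_eY <-]]; rewrite /preimage /= UeY.
Qed.

Lemma zeta_point_trace_equiv :
  conn_equiv (Some : X -> zeta e point_trace) eY.
Proof.
exists zeta_to_connectification; split => //.
- exact: zeta_to_connectification_continuous.
- exists connectification_to_zeta; split.
  + exact: connectification_to_zeta_continuous.
  + case=> [x|] /=; first exact: connectification_to_zeta_eY.
    exact: connectification_to_zeta_p.
  + move=> y; case: (connectification_cases y) => [->|[x ->]].
    * by rewrite connectification_to_zeta_p.
    * by rewrite connectification_to_zeta_eY.
Qed.

Lemma Zfamily_point_trace : Zfamily e point_trace.
Proof.
split; [exact: point_trace_remainder | exact: point_trace_compact |].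
by move=> x; exact: point_trace_component.
Qed.

End connectification_trace.

Lemma conn_equiv_le (X Y1 Y2 : topologicalType)
    (e1 : X -> Y1) (e2 : X -> Y2) :
  conn_equiv e1 e2 -> conn_le e1 e2 /\ conn_le e2 e1.
Proof.
case=> h [ch [g [cg hK gK]] he]; split; last by exists h.
exists g; split => //; apply/funext => x /=.
by rewrite -(congr1 (fun f => f x) he) /= hK.
Qed.

Lemma Ti_completely_regular (i : sep_index) (T : topologicalType) :
  Ti i T -> accessible_space T /\ completely_regular T.
Proof.
case: i => -[aT sepT]; split => //;
  apply: normal_accessible_completely_regular => //.
exact/completely_normal_normal/hereditarily_normal_completely_normal.
Qed.

Theorem lemma3p1 (i : sep_index) (X B : topologicalType) (e : X -> B) :
  Ti i X -> locally_connected X -> [set: X] !=set0 -> stone_cech e ->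
  [/\ (forall Z : set B, Zfamily e Z ->
         Ti i (zeta e Z) /\
         one_point_connectification (Some : X -> zeta e Z)),
      (forall Z1 Z2 : set B, Zfamily e Z1 -> Zfamily e Z2 ->
         (Z1 `<=` Z2 <->
          conn_le (Some : X -> zeta e Z2) (Some : X -> zeta e Z1))),
      (forall Z1 Z2 : set B, Zfamily e Z1 -> Zfamily e Z2 ->
         conn_equiv (Some : X -> zeta e Z1) (Some : X -> zeta e Z2) ->
         Z1 = Z2) &
      (forall (Y : topologicalType) (eY : X -> Y),
         Ti i Y -> one_point_connectification eY ->
         exists Z : set B, Zfamily e Z /\
           conn_equiv (Some : X -> zeta e Z) eY)].
Proof.
move=> TiX lcX [x0 _] scB; have [cB hsB embe dense_e _] := scB.
have nB : normal_space B := compact_normal hsB cB.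
have Znonempty Z : Zfamily e Z -> Z !=set0.
  by case=> _ _ /(_ x0) [b [Zb _]]; exists b.
have Zclosed Z : Zfamily e Z -> closed Z by case=> _ /(compact_closed hsB).
have leP Z1 Z2 : Zfamily e Z1 -> Zfamily e Z2 ->
    Z1 `<=` Z2 <-> conn_le (Some : X -> zeta e Z2) (Some : X -> zeta e Z1).
  move=> FZ1 FZ2; have [Z1X _ _] := FZ1; have [Z2X _ _] := FZ2.
  exact: zeta_leP (Zclosed _ FZ1) (Zclosed _ FZ2) Z1X Z2X (Znonempty _ FZ1).
split.
- move=> Z FZ; have [ZX _ Zcomp] := FZ; have cZ := Zclosed Z FZ.
  split; last exact: zeta_one_point_connectification (Znonempty Z FZ) Zcomp.
  case: i TiX => -[T1X sepX]; split; try exact: zeta_T1.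
  + exact: zeta_completely_regular.
  + exact: zeta_normal.
  + apply/completely_normal_hereditarily_normal/zeta_completely_normal => //.
    exact: hereditarily_normal_completely_normal.
- exact: leP.
- move=> Z1 Z2 FZ1 FZ2 /conn_equiv_le [le12 le21].
  apply/seteqP; split; first exact/(leP _ _ FZ1 FZ2).
  exact/(leP _ _ FZ2 FZ1).
- move=> Y eY /Ti_completely_regular [T1Y crY] [embY _ [p [np pu]] conY].
  exists (point_trace e eY p); split; first exact: Zfamily_point_trace.
  exact: zeta_point_trace_equiv.
Qed.
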